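(* If $r$ is a nonzero integer and $n$ is a positive integer, then the integer $F_r^2+F_rF_{r-1}-F_{r-1}^2$ divides both \[ F_r^{n+2}L_n+F_{r-1}F_r^{n+1}L_{n+1}+F_rF_{r-1}^{n+1}-2F_{r-1}^{n+2} \quad\text{and}\quad F_r^{n+2}F_n+F_{r-1}F_r^{n+1}F_{n+1}-F_rF_{r-1}^{n+1}. \]
   Context: $F_n$ and $L_n$ denote the Fibonacci and Lucas numbers, defined for all integers $n$ by $F_0=0,F_1=1$, $L_0=2,L_1=1$ and $x_n=x_{n-1}+x_{n-2}$; equivalently $F_n=(\alpha^n-\beta^n)/(\alpha-\beta)$, $L_n=\alpha^n+\beta^n$ with $\alpha=(1+\sqrt5)/2$, $\beta=(1-\sqrt5)/2$. In particular $F_{-n}=(-1)^{n-1}F_n$ and $L_{-n}=(-1)^nL_n$. *)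

From Stdlib Require Import ZArith List.
Import ListNotations.
Open Scope Z_scope.

Fixpoint fib_pair (n : nat) : Z * Z :=
  match n with
  | O => (0, 1)
  | S m => let (a, b) := fib_pair m in (b, a + b)
  end.
Definition fibN (n : nat) : Z := fst (fib_pair n).
Definition lucN (n : nat) : Z := 2 * fibN (S n) - fibN n. (* = F_{n-1}+F_{n+1} *)

Definition fib (n : Z) : Z :=
  if 0 <=? n then fibN (Z.to_nat n)
  else (-1) ^ (- n - 1) * fibN (Z.to_nat (- n)).
Definition luc (n : Z) : Z :=
  if 0 <=? n then lucN (Z.to_nat n)
  else (-1) ^ (- n) * lucN (Z.to_nat (- n)).

Example fib_chk : List.map fib (-5 :: -4 :: -1 :: 0 :: 1 :: 2 :: 7 :: nil)%Z = (5 :: -3 :: 1 :: 0 :: 1 :: 1 :: 13 :: nil)%Z.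
Proof. reflexivity. Qed.
Example luc_chk : List.map luc (-3 :: -2 :: 0 :: 1 :: 2 :: 3 :: 5 :: nil)%Z = (-4 :: 3 :: 2 :: 1 :: 3 :: 4 :: 11 :: nil)%Z.
Proof. reflexivity. Qed.

From Stdlib Require Import ZArith Lia.
Open Scope Z_scope.

(* Write a, b for F_r, F_(r-1) and D = a^2 + a b - b^2; nothing else is used
   about a and b.  For any sequence x with the
   Fibonacci recurrence, u_m = a^m (a x_m + b x_(m+1)) satisfies
   u_(m+2) = a u_(m+1) + a^2 u_m, and since b^2 = a^2 + a b (mod D) so does b^m
   modulo D.  Hence every combination s u_m - t b^m that is divisible by D for
   m = 0, 1 is divisible by D for all m; both claims are of this form, with
   x = L, (s, t) = (a, 2 b^2 - a b) and x = F, (s, t) = (1, b). *)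

Lemma divide_linear_recurrence (d p q : Z) (w : nat -> Z) :
  (d | w 0%nat) -> (d | w 1%nat) ->
  (forall m, (d | w (S (S m)) - p * w (S m) - q * w m)) ->
  forall m, (d | w m).
Proof.
  intros h0 h1 hrec m.
  enough (H : (d | w m) /\ (d | w (S m))) by apply H.
  induction m as [|m [IHm IHSm]]; [split; assumption|].
  split; [assumption|].
  replace (w (S (S m)))
    with ((w (S (S m)) - p * w (S m) - q * w m) + p * w (S m) + q * w m) by ring.
  apply Z.divide_add_r; [apply Z.divide_add_r|]; auto using Z.divide_mul_r.
Qed.

Definition fib_like (x : nat -> Z) : Prop :=
  forall m, x (S (S m)) = x (S m) + x m.

Lemma fib_pair_fibN (m : nat) : fib_pair m = (fibN m, fibN (S m)).
Proof. unfold fibN; simpl. destruct (fib_pair m); reflexivity. Qed.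

Lemma fib_like_fibN : fib_like fibN.
Proof. intro m. unfold fibN at 1; simpl. rewrite fib_pair_fibN. simpl. ring. Qed.

Lemma fib_like_lucN : fib_like lucN.
Proof. intro m. unfold lucN. rewrite !fib_like_fibN. ring. Qed.

Lemma pow_of_nat_succ (a : Z) (m : nat) : a ^ Z.of_nat (S m) = a * a ^ Z.of_nat m.
Proof. rewrite Nat2Z.inj_succ, Z.pow_succ_r by lia. reflexivity. Qed.

Section Twist.

Variables a b : Z.

Local Notation D := (a ^ 2 + a * b - b ^ 2).

Definition twist (x : nat -> Z) (m : nat) : Z :=
  a ^ Z.of_nat m * (a * x m + b * x (S m)).

Lemma twist_rec (x : nat -> Z) : fib_like x ->
  forall m, twist x (S (S m)) = a * twist x (S m) + a ^ 2 * twist x m.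
Proof.
  intros hx m. unfold twist.
  rewrite !pow_of_nat_succ, !hx. ring.
Qed.

Lemma twist_combination_divide (x : nat -> Z) (s t : Z) : fib_like x ->
  (D | s * twist x 0 - t) -> (D | s * twist x 1 - t * b) ->
  forall m, (D | s * twist x m - t * b ^ Z.of_nat m).
Proof.
  intros hx h0 h1.
  apply (divide_linear_recurrence _ a (a ^ 2)).
  - change (b ^ Z.of_nat 0) with 1. rewrite Z.mul_1_r. exact h0.
  - change (b ^ Z.of_nat 1) with (b ^ 1). rewrite Z.pow_1_r. exact h1.
  - intro m. exists (t * b ^ Z.of_nat m).
    rewrite !twist_rec, !pow_of_nat_succ by assumption. ring.
Qed.

End Twist.

Lemma fib_of_nat (m : nat) : fib (Z.of_nat m) = fibN m.
Proof. unfold fib. rewrite (proj2 (Z.leb_le _ _)) by lia. now rewrite Nat2Z.id. Qed.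

Lemma luc_of_nat (m : nat) : luc (Z.of_nat m) = lucN m.
Proof. unfold luc. rewrite (proj2 (Z.leb_le _ _)) by lia. now rewrite Nat2Z.id. Qed.

Lemma luc_combination_divide (a b n : Z) : 0 <= n ->
  (a ^ 2 + a * b - b ^ 2 | a ^ (n + 2) * luc n + b * a ^ (n + 1) * luc (n + 1)
                           + a * b ^ (n + 1) - 2 * b ^ (n + 2)).
Proof.
  intro hn. destruct (Z_of_nat_complete n hn) as [m ->].
  replace (Z.of_nat m + 2) with (Z.of_nat (S (S m))) by lia.
  replace (Z.of_nat m + 1) with (Z.of_nat (S m)) by lia.
  rewrite !luc_of_nat, !pow_of_nat_succ.
  match goal with |- (_ | ?e) =>
    replace e with (a * twist a b lucN m - (2 * b ^ 2 - a * b) * b ^ Z.of_nat m)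
      by (unfold twist; ring) end.
  apply twist_combination_divide; [exact fib_like_lucN | |].
  - exists 2. unfold twist, lucN, fibN; cbn [fib_pair fst Z.of_nat]; ring.
  - exists (a + 2 * b). unfold twist, lucN, fibN; cbn [fib_pair fst Z.of_nat]; ring.
Qed.

Lemma fib_combination_divide (a b n : Z) : 0 <= n ->
  (a ^ 2 + a * b - b ^ 2 | a ^ (n + 2) * fib n + b * a ^ (n + 1) * fib (n + 1)
                           - a * b ^ (n + 1)).
Proof.
  intro hn. destruct (Z_of_nat_complete n hn) as [m ->].
  replace (Z.of_nat m + 2) with (Z.of_nat (S (S m))) by lia.
  replace (Z.of_nat m + 1) with (Z.of_nat (S m)) by lia.
  rewrite !fib_of_nat, !pow_of_nat_succ.
  match goal with |- (_ | ?e) =>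
    replace e with (a * (1 * twist a b fibN m - b * b ^ Z.of_nat m))
      by (unfold twist; ring) end.
  apply Z.divide_mul_r, twist_combination_divide; [exact fib_like_fibN | |].
  - exists 0. unfold twist, fibN; cbn [fib_pair fst Z.of_nat]; ring.
  - exists 1. unfold twist, fibN; cbn [fib_pair fst Z.of_nat]; ring.
Qed.

Theorem mainTheorem5 (r n : Z) (hr : r <> 0) (hn : 0 < n) :
  let D := fib r ^ 2 + fib r * fib (r - 1) - fib (r - 1) ^ 2 in
  (D | fib r ^ (n + 2) * luc n + fib (r - 1) * fib r ^ (n + 1) * luc (n + 1)
       + fib r * fib (r - 1) ^ (n + 1) - 2 * fib (r - 1) ^ (n + 2)) /\
  (D | fib r ^ (n + 2) * fib n + fib (r - 1) * fib r ^ (n + 1) * fib (n + 1)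
       - fib r * fib (r - 1) ^ (n + 1)).
Proof.
  split.
  - apply luc_combination_divide. lia.
  - apply fib_combination_divide. lia.
Qed.
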